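(* Let $k\ge 2$ and $d\in\{2,\dots,k\}$. For any $\alpha\in(0,1)$, any $\mu>1/k$ and any $\epsilon\in(0,\mu k-1)$, the random bipartite graph with $n$ variable vertices and $m=\lfloor\mu n\log n\rfloor$ constraint vertices has no $\alpha$-small $d$-stopping set with probability $1-O(n^{1-\mu k+\epsilon})$ as $n\to\infty$.
   Context: Random bipartite graph: variable vertices $[n]$, constraint vertices $[m]$; for each $a\in[m]$ independently, a $k$-tuple of pairwise distinct elements of $[n]$ is chosen uniformly among all $n(n-1)\cdots(n-k+1)$ such tuples, and $\partial(a)\subseteq[n]$ denotes the set of its entries (the neighbours of $a$). $d$-stopping set: a set $V'\subseteq[n]$ such that $|\partial(a)\cap V'|\notin\{1,2,\dots,d-1\}$ for every $a\in[m]$. For $\alpha\in(0,1)$, an $\alpha$-small $d$-stopping set is a nonempty $d$-stopping set of size smaller than $\alpha n$. *)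

From mathcomp Require Import all_boot.
Set Implicit Arguments. Unset Strict Implicit. Unset Printing Implicit Defensive.

(* A sample point of the random bipartite graph with n variables, m
   constraints and arity k: for each constraint a : 'I_m, a k-tuple
   (function 'I_k -> 'I_n) of variable vertices. *)
Definition config (n k m : nat) := {ffun 'I_m -> {ffun 'I_k -> 'I_n}}.

Definition valid_config n k m (G : config n k m) : bool :=
  [forall a, injectiveb (G a)].

Definition nbrs n k m (G : config n k m) (a : 'I_m) : {set 'I_n} :=
  [set (G a) i | i : 'I_k].

Definition stopping_set n k m (d : nat) (G : config n k m) (V : {set 'I_n}) : bool :=
  [forall a, (#|nbrs G a :&: V| == 0) || (d <= #|nbrs G a :&: V|)].

(* Number of valid configurations (the uniform sample space). *)
Definition total_count (n k m : nat) : nat :=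
  #|[set G : config n k m | valid_config G]|.

Definition bad_count (n k m d : nat) (small : nat -> bool) : nat :=
  #|[set G : config n k m | valid_config G &&
      [exists V : {set 'I_n}, [&& V != set0, small #|V| & stopping_set d G V]]]|.

From Stdlib Require Import Reals.
Open Scope R_scope.

Definition num_constraints (mu : R) (n : nat) : nat :=
  Z.to_nat (Int_part (mu * INR n * ln (INR n))).

Definition alpha_small (alpha : R) (n s : nat) : bool :=
  if Rlt_dec (INR s) (alpha * INR n) then true else false.

Definition prob_small_stopping (k d : nat) (alpha mu : R) (n : nat) : R :=
  INR (bad_count n k (num_constraints mu n) d (alpha_small alpha n))
  / INR (total_count n k (num_constraints mu n)).

(* A nonempty set V of s vertices stops the graph only if no constraint meets V in
   exactly one vertex. Among the n^_k injective k-tuples, at least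
   s k (n-s-k)^(k-1) meet V once (one count per vertex of V), so V is a stopping
   set with probability at most exp(-m q_s), q_s = s k (n-s-k)^(k-1) / n^k.
   A union bound over the 'C(n,s) sets of each size s < alpha n remains.
   For s <= delta n, q_s >= (1 - eps/(mu k)) s k / n and 'C(n,s) <= n^s, so the
   size-s term is at most e^k n^(s (1 - mu k + eps)): a geometric series dominated
   by s = 1. For delta n < s < alpha n, n q_s is bounded below by a constant, so
   each term is at most e^k exp(-gam n log n) and even all 2^n sets together are
   negligible. *)

From Stdlib Require Import Reals ZArith Lra.
From mathcomp Require Import all_boot zify.
Set Implicit Arguments. Unset Strict Implicit. Unset Printing Implicit Defensive.

Local Open Scope nat_scope.

Lemma ffactS_subn a j : a.+1 ^_ j.+1 - a ^_ j.+1 = j.+1 * a ^_ j.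
Proof.
rewrite ffactSS ffactnSr.
have [le_ja | lt_aj] := leqP j a; last by rewrite ffact_small // !muln0.
have -> : a.+1 = j.+1 + (a - j) by lia.
by rewrite mulnDl [a ^_ j * _]mulnC addnK.
Qed.

Lemma leq_expn2r e m1 m2 : m1 <= m2 -> m1 ^ e <= m2 ^ e.
Proof. by case: e => // e; rewrite leq_exp2r. Qed.

Lemma leq_ffact_expn a j : a ^_ j <= a ^ j.
Proof.
elim: j => // j IHj; rewrite ffactnSr expnSr.
exact: leq_mul IHj (leq_subr _ _).
Qed.

Lemma leq_expn_ffact a j : (a - j) ^ j <= a ^_ j.
Proof.
elim: j => // j IHj; rewrite ffactnSr expnSr.
apply: leq_mul; last by rewrite leq_sub2l.
by apply: leq_trans IHj; rewrite leq_expn2r // subnS leq_pred.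
Qed.

Lemma leq_bin_expn n s : 'C(n, s) <= n ^ s.
Proof.
apply: leq_trans (leq_ffact_expn n s); rewrite -bin_ffact.
exact: leq_pmulr (fact_gt0 s).
Qed.

Lemma sum_bin n : \sum_(s < n.+1) 'C(n, s) = 2 ^ n.
Proof.
rewrite -[2]/(1 + 1) expnDn; apply: eq_bigr => s _.
by rewrite !exp1n !muln1.
Qed.

Lemma cardE_sum (T : finType) (A : {set T}) : #|A| = \sum_x (x \in A : nat).
Proof. by rewrite -sum1_card big_mkcond; apply: eq_bigr => x _; case: (x \in A). Qed.

Section Tuples.
Variables n k : nat.
Implicit Types (V X : {set 'I_n}) (f : {ffun 'I_k -> 'I_n}).

Definition inj_tuples_on X := [set f : {ffun 'I_k -> 'I_n} in ffun_on X | injectiveb f].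

Definition tuple_range f := [set f i | i : 'I_k].

Definition stopping_tuples d V :=
  [set f : {ffun 'I_k -> 'I_n} | injectiveb f &&
    ((#|tuple_range f :&: V| == 0) || (d <= #|tuple_range f :&: V|))].

Definition single_hit_tuples V v := inj_tuples_on (v |: ~: V) :\: inj_tuples_on (~: V).

Lemma single_hit_range V v f :
  v \in V -> f \in single_hit_tuples V v -> tuple_range f :&: V = [set v].
Proof.
rewrite !inE => vV /and3P[not_avoid /forallP in_vC f_inj].
have fV_v i : f i \in V -> f i = v.
  by move: (in_vC i); rewrite !inE => /orP[/eqP //|/negP].
apply/setP => x; rewrite !inE; apply/andP/eqP => [[/imsetP[i _ ->] /fV_v] //|->].
split=> //; have /existsP[i fiV] : [exists i, f i \in V].
  apply: contraR not_avoid => /existsPn avoid; rewrite f_inj andbT.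
  by apply/forallP => i; rewrite inE; exact: avoid.
by rewrite -(fV_v i fiV) imset_f.
Qed.

Lemma card_inj_tuples_on X : #|inj_tuples_on X| = #|X| ^_ k.
Proof. by rewrite card_inj_ffuns_on card_ord. Qed.

Lemma card_single_hit_tuples V v : v \in V ->
  #|single_hit_tuples V v| = (n - #|V|).+1 ^_ k - (n - #|V|) ^_ k.
Proof.
move=> vV; have cardC : #|~: V| = n - #|V| by rewrite cardsCs setCK card_ord.
rewrite cardsD; have -> : inj_tuples_on (v |: ~: V) :&: inj_tuples_on (~: V)
    = inj_tuples_on (~: V).
  apply/setIidPr/subsetP => f; rewrite !inE => /andP[/forallP f_on ->].
  rewrite andbT; apply/forallP => i; move: (f_on i).
  by rewrite !inE => /negPf ->; rewrite orbT.
by rewrite !card_inj_tuples_on cardsU1 cardC !inE vV.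
Qed.

Lemma card_stopping_single_hit d V : 1 < d ->
  #|stopping_tuples d V| + \sum_(v in V) #|single_hit_tuples V v|
    <= #|[set f : {ffun 'I_k -> 'I_n} | injectiveb f]|.
Proof.
move=> d_gt1; under [\sum_(v in V) _]eq_bigr do rewrite cardE_sum.
rewrite !cardE_sum exchange_big -big_split /=; apply: leq_sum => f _.
case: (boolP [exists v in V, f \in single_hit_tuples V v]) => [/exists_inP[v vV fv]|].
  have hit := single_hit_range vV fv.
  have f_inj : injectiveb f by move: fv; rewrite !inE => /and3P[].
  rewrite (bigD1 v) //= fv big1 => [|u /andP[uV u_v]].
    by rewrite !inE f_inj hit cards1 /= [d <= 1]leqNgt d_gt1.
  suff /negbTE -> : f \notin single_hit_tuples V u by [].
  apply: contra u_v => fu.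
  by apply/eqP/set1_inj; rewrite -(single_hit_range uV fu) hit.
move=> /exists_inPn no_hit; rewrite big1 => [|v /no_hit/negbTE -> //].
by rewrite addn0 !inE; case: injectiveb; rewrite ?leq_b1.
Qed.

Lemma card_stopping_tuples_bound d V : 1 < d -> 0 < k ->
  #|stopping_tuples d V| + #|V| * (k * (n - #|V| - k) ^ (k - 1)) <= n ^_ k.
Proof.
move=> d_gt1 k_gt0; have := card_stopping_single_hit V d_gt1.
rewrite card_inj_ffuns !card_ord; apply: leq_trans; rewrite leq_add2l.
rewrite (eq_bigr _ (fun v => @card_single_hit_tuples V v)) sum_nat_const.
case: k k_gt0 => // j _; rewrite ffactS_subn subSS subn0 !leq_mul2l /=; apply/orP; right.
by rewrite (leq_trans _ (leq_expn_ffact _ _)) // leq_expn2r // leq_sub2l.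
Qed.

End Tuples.

Section Configurations.
Variables n k m : nat.

Lemma card_config_family (A : {set {ffun 'I_k -> 'I_n}}) :
  #|[set G : config n k m | [forall a, G a \in A]]| = #|A| ^ m.
Proof.
transitivity #|@ffun_on_mem 'I_m _ (mem A)|; last by rewrite card_ffun_on card_ord.
by apply: eq_card => G; rewrite inE; apply/forallP/ffun_onP.
Qed.

Lemma total_countE : total_count n k m = (n ^_ k) ^ m.
Proof.
rewrite -[n in n ^_ k]card_ord -[k in _ ^_ k]card_ord -card_inj_ffuns.
rewrite -card_config_family; apply: eq_card => G; rewrite !inE.
by apply/forallP/forallP => G_inj a; move: (G_inj a); rewrite inE.
Qed.

Lemma valid_stopping_setE d (G : config n k m) V :
  valid_config G && stopping_set d G V = [forall a, G a \in stopping_tuples k d V].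
Proof.
apply/andP/forallP => [[/forallP G_inj /forallP G_stop] a|G_stop].
  by rewrite inE G_inj G_stop.
by split; apply/forallP => a; move: (G_stop a); rewrite inE => /andP[].
Qed.

Lemma bad_count_le_sum_sets d (small : nat -> bool) :
  bad_count n k m d small <=
  \sum_(V : {set 'I_n} | (V != set0) && small #|V|) #|stopping_tuples k d V| ^ m.
Proof.
under eq_bigr do rewrite -card_config_family cardE_sum.
rewrite /bad_count cardE_sum exchange_big /=; apply: leq_sum => G _; rewrite inE.
case/boolP: (valid_config G) => //= G_valid.
case/boolP: [exists V, _] => // /existsP[V /and3P[V0 V_small G_stop]].
by rewrite (bigD1 V) ?V0 //= inE -valid_stopping_setE G_valid G_stop.
Qed.

End Configurations.

Lemma sum_set_card n (F : nat -> nat) :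
  \sum_(V : {set 'I_n}) F #|V| = \sum_(s < n.+1) 'C(n, s) * F s.
Proof.
have card_lt (V : {set 'I_n}) : #|V| < n.+1.
  by rewrite ltnS; have := max_card (mem V); rewrite card_ord.
rewrite (partition_big (fun V : {set 'I_n} => inord #|V| : 'I_n.+1) xpredT) //=.
apply: eq_bigr => s _.
have sizeE (V : {set 'I_n}) : (inord #|V| == s :> 'I_n.+1) = (#|V| == s).
  by rewrite -val_eqE /= inordK.
under eq_bigl do rewrite sizeE.
rewrite (eq_bigr (fun _ => F s)) => [|V /eqP -> //].
rewrite sum_nat_cond_const -[n in 'C(n, _)]card_ord -card_draws mulnC.
by congr (_ * _); apply: eq_card => V; rewrite !inE.
Qed.

Definition stopping_tuples_ub n k s := n ^_ k - s * (k * (n - s - k) ^ (k - 1)).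

Definition bad_size_bound n k m (small : nat -> bool) s :=
  'C(n, s) * (if (0 < s) && small s then stopping_tuples_ub n k s ^ m else 0).

Lemma bad_count_le_sum_sizes n k m d (small : nat -> bool) : 1 < d -> 0 < k ->
  bad_count n k m d small <= \sum_(s < n.+1) bad_size_bound n k m small s.
Proof.
move=> d_gt1 k_gt0; apply: leq_trans (bad_count_le_sum_sets _ _ _ _ _) _.
rewrite -(sum_set_card n
  (fun s => if (0 < s) && small s then stopping_tuples_ub n k s ^ m else 0)).
rewrite [X in _ <= X](bigID (fun V : {set 'I_n} => (V != set0) && small #|V|)) /=.
apply: leq_trans (leq_addr _ _) ; apply: leq_sum => V /andP[V0 V_small].
rewrite card_gt0 V0 V_small leq_expn2r //.
have bound := card_stopping_tuples_bound V d_gt1 k_gt0.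
rewrite /stopping_tuples_ub leq_subRL; first by rewrite addnC.
exact: leq_trans (leq_addl _ _) bound.
Qed.

Local Open Scope R_scope.

Lemma INR_expn a j : INR (a ^ j) = INR a ^ j.
Proof. by elim: j => // j IHj; rewrite expnS mult_INR IHj. Qed.

Lemma INR_sum_ord N (F : nat -> nat) :
  INR (\sum_(i < N.+1) F i) = sum_f_R0 (fun i => INR (F i)) N.
Proof.
elim: N => [|N IHN]; first by rewrite big_ord_recr big_ord0.
by rewrite big_ord_recr plus_INR IHN.
Qed.

Lemma exp_le x y : x <= y -> exp x <= exp y.
Proof. by case=> [/exp_increasing/Rlt_le | ->] //; apply: Rle_refl. Qed.

Lemma ln_le x y : 0 < x -> x <= y -> ln x <= ln y.
Proof. by move=> x_gt0 [/(ln_increasing _ _ x_gt0)/Rlt_le | ->] //; apply: Rle_refl. Qed.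

Lemma exp_pow x m : exp x ^ m = exp (INR m * x).
Proof.
elim: m => [|m IHm]; first by rewrite Rmult_0_l exp_0.
by rewrite [_ ^ _.+1]/= IHm S_INR -exp_plus; congr exp; ring.
Qed.

Lemma INR_subn_le_exp a b : (0 < a)%N ->
  INR (a - b) <= INR a * exp (- (INR b / INR a)).
Proof.
move=> a_gt0; have Ra_gt0 : 0 < INR a by apply/lt_0_INR/ltP.
have [le_ba | lt_ab] := leqP b a; last first.
  have -> : (a - b = 0)%N by apply/eqP; rewrite subn_eq0 ltnW.
  by have := exp_pos (- (INR b / INR a)); rewrite /=; nra.
rewrite minus_INR; last exact/leP.
have := exp_ineq1_le (- (INR b / INR a)).
have -> : INR a - INR b = INR a * (1 + - (INR b / INR a)) by field; lra.
by move=> /(Rmult_le_compat_l _ _ _ (Rlt_le _ _ Ra_gt0)).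
Qed.

(* A lower bound for the probability that a uniform injective k-tuple meets a
   given set of s vertices in exactly one vertex. *)
Definition hit_rate n k s := INR (s * (k * (n - s - k) ^ (k - 1))) / INR n ^ k.

Lemma stopping_tuples_ratio_le n k m s : (k <= n)%N ->
  INR (stopping_tuples_ub n k s ^ m) / INR (n ^_ k) ^ m
    <= exp (- (INR m * hit_rate n k s)).
Proof.
move=> le_kn; set T := INR (n ^_ k); set x := INR (s * (k * (n - s - k) ^ (k - 1))).
have T_gt0 : 0 < T by apply/lt_0_INR/ltP; rewrite ffact_gt0.
have T_le : T <= INR n ^ k.
  by rewrite -INR_expn; apply/le_INR/leP; exact: leq_ffact_expn.
have ub_le : INR (stopping_tuples_ub n k s) <= T * exp (- hit_rate n k s).
  have nk_gt0 : (0 < n ^_ k)%N by rewrite ffact_gt0.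
  apply: Rle_trans (INR_subn_le_exp _ nk_gt0) _; rewrite -/T -/x.
  apply: Rmult_le_compat_l; first lra.
  apply/exp_le/Ropp_le_contravar/Rmult_le_compat_l; first exact: pos_INR.
  exact: Rinv_le_contravar.
have -> : - (INR m * hit_rate n k s) = INR m * - hit_rate n k s by ring.
rewrite -exp_pow INR_expn.
apply: (Rmult_le_reg_r (T ^ m)); first exact: pow_lt.
rewrite /Rdiv Rmult_assoc Rinv_l; last by apply: pow_nonzero; lra.
rewrite Rmult_1_r Rmult_comm -Rpow_mult_distr.
by apply: pow_incr; split; [exact: pos_INR | exact: ub_le].
Qed.

Lemma hit_rate_le n k s : (0 < k)%N -> (0 < n)%N -> (s <= n)%N ->
  hit_rate n k s <= INR k.
Proof.
move=> k_gt0 n_gt0 le_sn; have N_gt0 : 0 < INR n ^ k by apply/pow_lt/lt_0_INR/ltP.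
have num_le : (s * (k * (n - s - k) ^ (k - 1)) <= k * n ^ k)%N.
  rewrite -(prednK k_gt0) expnS mulnCA subn1 /= leq_mul // leq_mul //.
  by rewrite leq_expn2r // -subnDA leq_subr.
rewrite /hit_rate; apply: (Rmult_le_reg_r _ _ _ N_gt0).
rewrite /Rdiv Rmult_assoc Rinv_l; last lra.
by rewrite Rmult_1_r -INR_expn -mult_INR; apply/le_INR/leP.
Qed.

Lemma hit_rate_ge n k s y : (0 < k)%N -> 0 < INR n ->
  0 <= y * INR n <= INR (n - s - k) ->
  INR s * INR k * y ^ k.-1 / INR n <= hit_rate n k s.
Proof.
case: k => // j _ N_gt0 y_range; rewrite /hit_rate subSS subn0 !mult_INR INR_expn.
have Nj_gt0 : 0 < INR n ^ j by apply: pow_lt.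
have := pow_incr _ _ j y_range; rewrite Rpow_mult_distr => pow_le.
have -> : INR s * INR j.+1 * y ^ j / INR n
    = INR s * INR j.+1 * (y ^ j * INR n ^ j) / INR n ^ j.+1.
  by rewrite [INR n ^ j.+1]/=; field; lra.
apply: Rmult_le_compat_r; first by apply/Rlt_le/Rinv_0_lt_compat/pow_lt.
rewrite Rmult_assoc; apply: Rmult_le_compat_l; first exact: pos_INR.
by apply: Rmult_le_compat_l; first exact: pos_INR.
Qed.

Lemma num_constraints_ge mu n :
  mu * INR n * ln (INR n) - 1 <= INR (num_constraints mu n).
Proof.
rewrite /num_constraints; set z := Int_part _.
have := base_Int_part (mu * INR n * ln (INR n)); rewrite -/z.
have [z_ge0 | z_lt0] := Z_le_gt_dec 0 z.
  by rewrite [INR (Z.to_nat z)]INR_IZR_INZ Z2Nat.id //; lra.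
have : IZR z < 0 by apply: IZR_lt; lia.
by have := pos_INR (Z.to_nat z); lra.
Qed.

Lemma bernoulli_ineq y j : 0 <= y <= 1 -> 1 - INR j * y <= (1 - y) ^ j.
Proof.
move=> y_range; elim: j => [|j IHj]; first by rewrite /=; lra.
rewrite [_ ^ j.+1]/= S_INR.
have : (1 - y) * (1 - INR j * y) <= (1 - y) * (1 - y) ^ j.
  by apply: Rmult_le_compat_l; lra.
by have := pos_INR j; nra.
Qed.

Lemma INR_bin_le_exp n s : 0 < INR n -> INR 'C(n, s) <= exp (INR s * ln (INR n)).
Proof.
by move=> N_gt0; rewrite -exp_pow exp_ln // -INR_expn; apply/le_INR/leP/leq_bin_expn.
Qed.

Definition pos_pow (r : R) (s : nat) := if s is 0%N then 0 else r ^ s.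

Lemma pos_powE r s : (0 < s)%N -> pos_pow r s = r ^ s.
Proof. by case: s. Qed.

Lemma pos_pow_ge0 r s : 0 <= r -> 0 <= pos_pow r s.
Proof. by case: s => [|s] r_ge0; [apply: Rle_refl | exact: pow_le]. Qed.

Lemma sum_pos_pow_le r N : 0 <= r <= / 2 -> sum_f_R0 (pos_pow r) N <= 2 * r.
Proof.
move=> r_range; have := pow_le r N.+1 (proj1 r_range).
suff : sum_f_R0 (pos_pow r) N <= 2 * r - 2 * r ^ N.+1 by lra.
elim: N => [|N IHN]; first by rewrite /=; lra.
rewrite tech5 /= in IHN *.
have : 0 <= r * r ^ N * (/ 2 - r).
  by apply: Rmult_le_pos; [exact: pow_le r N.+1 (proj1 r_range) | lra].
lra.
Qed.

Definition eventually (P : nat -> Prop) := exists N0, forall n, (N0 <= n)%coq_nat -> P n.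

Lemma eventually_and (P Q : nat -> Prop) :
  eventually P -> eventually Q -> eventually (fun n => P n /\ Q n).
Proof.
move=> [N1 P_after] [N2 Q_after]; exists (Nat.max N1 N2) => n le_n.
by split; [apply: P_after | apply: Q_after]; lia.
Qed.

Lemma eventually_mono (P Q : nat -> Prop) :
  (forall n, P n -> Q n) -> eventually P -> eventually Q.
Proof. by move=> PQ [N0 P_after]; exists N0 => n /P_after/PQ. Qed.

Lemma eventually_INR_ge r : eventually (fun n => r <= INR n).
Proof.
have [N0 N0_gt] := INR_archimed 1 r Rlt_0_1.
by exists N0 => n /le_INR; lra.
Qed.

Lemma eventually_ln_INR_ge r : eventually (fun n => r <= ln (INR n)).
Proof.
apply: eventually_mono (eventually_INR_ge (exp r)) => n r_le.
by rewrite -[r]ln_exp; apply: ln_le => //; exact: exp_pos.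
Qed.

Section Asymptotics.
Variables (k d : nat) (alpha mu eps : R).
Hypotheses (k_ge2 : (2 <= k)%N) (d_gt1 : (1 < d)%N) (alpha01 : 0 < alpha < 1)
  (mu_gt0 : 0 < mu) (eps_range : 0 < eps < mu * INR k - 1).

Let K := INR k.
Let beta := 1 - mu * K + eps.
Let delta := eps / (2 * mu * K ^ 2).
Let gam := mu * delta * K * ((1 - alpha) / 2) ^ k.-1.

Let K_ge2 : 2 <= K.
Proof. by apply: (le_INR 2); apply/leP. Qed.

Let delta_gt0 : 0 < delta.
Proof.
apply: Rdiv_lt_0_compat; first lra.
by apply: Rmult_lt_0_compat; [lra | apply: pow_lt; have := K_ge2; lra].
Qed.

Let delta_epsE : 2 * mu * K ^ 2 * delta = eps.
Proof. by rewrite /delta; field; have := K_ge2; nra. Qed.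

Let gam_gt0 : 0 < gam.
Proof.
apply: Rmult_lt_0_compat; last by apply: pow_lt; lra.
by have := K_ge2; have := delta_gt0; nra.
Qed.

Let deltaK_lt1 : 2 * delta * K < 1.
Proof.
have muK_gt0 : 0 < mu * K by have := K_ge2; nra.
have : 2 * delta * K * (mu * K) = eps by rewrite -delta_epsE; ring.
by have := eps_range; rewrite -/K; nra.
Qed.

Section LargeN.
Variable n : nat.
Let N := INR n.
Let L := ln N.
Let m := num_constraints mu n.
Let q s := hit_rate n k s.
Hypotheses (N_ge2 : 2 <= N) (deltaN_ge : K <= delta * N)
  (alphaN_ge : K <= (1 - alpha) * N / 2).

Let N_gt0 : 0 < N.
Proof. lra. Qed.

Let L_gt0 : 0 < L.
Proof. by rewrite /L -ln_1; apply: ln_increasing; lra. Qed.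

Let k_le_n : (k <= n)%N.
Proof. by apply/leP/INR_le; rewrite -/N -/K; nra. Qed.

Let n_gt0 : (0 < n)%N.
Proof. exact: leq_trans (ltnW k_ge2) k_le_n. Qed.

Let N_sub_ge s : INR s + K <= N -> INR (n - s - k) = N - INR s - K.
Proof.
move=> le_skN; have le_skn : (s + k <= n)%coq_nat by apply: INR_le; rewrite plus_INR.
by rewrite -subnDA minus_INR // plus_INR /N /K; ring.
Qed.

Lemma exp_hit_rate_le s : (s <= n)%N ->
  exp (- (INR m * q s)) <= exp K * exp (- (mu * N * L * q s)).
Proof.
move=> le_sn; rewrite -exp_plus; apply: exp_le.
have q_range : 0 <= q s <= K.
  split; last exact: hit_rate_le (ltnW k_ge2) n_gt0 le_sn.
  by apply: Rmult_le_pos; [exact: pos_INR | exact/Rlt_le/Rinv_0_lt_compat/pow_lt].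
have := num_constraints_ge mu n; rewrite -/N -/L -/m => m_ge.
have : 0 <= (INR m - (mu * N * L - 1)) * q s by apply: Rmult_le_pos; lra.
nra.
Qed.

Lemma small_size_term_le s : (0 < s)%N -> INR s <= delta * N ->
  INR 'C(n, s) * exp (- (mu * N * L * q s)) <= exp (beta * L) ^ s.
Proof.
move=> s_gt0 s_le; have K2 := K_ge2; set y := 1 - 2 * delta.
have y_range : 0 <= y * N <= INR (n - s - k).
  by rewrite N_sub_ge /y; nra.
have q_ge := hit_rate_ge (ltnW k_ge2) N_gt0 y_range; rewrite -/K -/N -/(q s) in q_ge.
have y_pow : 1 - (K - 1) * (2 * delta) <= y ^ k.-1.
  rewrite -[K - 1]/(INR k - INR 1) -minus_INR -?subn1; last by apply/leP/ltnW.
  by apply: bernoulli_ineq; nra.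
have exponent_ge : (mu * K - eps) * INR s * L <= mu * N * L * q s.
  have sL_ge0 : 0 <= INR s * L by have := pos_INR s; nra.
  have : mu * L * INR s * K * (1 - (K - 1) * (2 * delta))
           <= mu * L * INR s * K * y ^ k.-1.
    by apply: Rmult_le_compat_l => //; apply: Rmult_le_pos; [nra | lra].
  have : mu * N * L * (INR s * K * y ^ k.-1 / N) <= mu * N * L * q s.
    by apply: Rmult_le_compat_l q_ge; apply: Rmult_le_pos; nra.
  have -> : mu * N * L * (INR s * K * y ^ k.-1 / N) = mu * L * INR s * K * y ^ k.-1.
    by field; lra.
  have : eps * (INR s * L) = 2 * mu * K ^ 2 * delta * (INR s * L) by rewrite delta_epsE.
  by nra.
rewrite exp_pow; have C_le := INR_bin_le_exp s N_gt0; rewrite -/L in C_le.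
have E_le : exp (- (mu * N * L * q s)) <= exp (- ((mu * K - eps) * INR s * L)).
  by apply: exp_le; lra.
apply: Rle_trans (Rmult_le_compat _ _ _ _ (pos_INR _) (Rlt_le _ _ (exp_pos _)) C_le E_le) _.
by rewrite -exp_plus; right; congr exp; rewrite /beta; ring.
Qed.

Lemma large_size_decay_le s : delta * N <= INR s -> INR s < alpha * N ->
  exp (- (mu * N * L * q s)) <= exp (- (gam * N * L)).
Proof.
move=> s_ge s_lt; have K2 := K_ge2; set y := (1 - alpha) / 2.
have y_range : 0 <= y * N <= INR (n - s - k) by rewrite N_sub_ge /y; nra.
have q_ge := hit_rate_ge (ltnW k_ge2) N_gt0 y_range; rewrite -/K -/N -/(q s) in q_ge.
have c_ge0 : 0 <= mu * L * K * y ^ k.-1.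
  apply: Rmult_le_pos; [apply: Rmult_le_pos; nra | apply: pow_le; rewrite /y; lra].
have : mu * L * K * y ^ k.-1 * (delta * N) <= mu * L * K * y ^ k.-1 * INR s.
  exact: Rmult_le_compat_l.
have : mu * N * L * (INR s * K * y ^ k.-1 / N) <= mu * N * L * q s.
  by apply: Rmult_le_compat_l q_ge; apply: Rmult_le_pos; nra.
have -> : mu * N * L * (INR s * K * y ^ k.-1 / N) = mu * L * K * y ^ k.-1 * INR s.
  by field; lra.
by move=> *; apply/exp_le/Ropp_le_contravar; rewrite /gam -/y; nra.
Qed.

Lemma size_term_le s : (s <= n)%N ->
  INR (bad_size_bound n k m (alpha_small alpha n) s) / INR (n ^_ k) ^ m
  <= pos_pow (exp (beta * L)) s * exp K + INR 'C(n, s) * (exp K * exp (- (gam * N * L))).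
Proof.
move=> le_sn; have eK_gt0 := exp_pos K; have C_ge0 := pos_INR 'C(n, s).
have T_gt0 : 0 < INR (n ^_ k) ^ m by apply/pow_lt/lt_0_INR/ltP; rewrite ffact_gt0.
have pow_ge0 := pos_pow_ge0 s (Rlt_le _ _ (exp_pos (beta * L))).
have head_ge0 : 0 <= pos_pow (exp (beta * L)) s * exp K by apply: Rmult_le_pos; lra.
have tail_ge0 : 0 <= INR 'C(n, s) * (exp K * exp (- (gam * N * L))).
  by apply: Rmult_le_pos => //; apply/Rlt_le/Rmult_lt_0_compat; apply: exp_pos.
rewrite /bad_size_bound; case: ifP => [/andP[s_gt0 s_small] | _]; last first.
  by rewrite muln0 /= /Rdiv Rmult_0_l; lra.
have s_lt : INR s < alpha * N by move: s_small; rewrite /alpha_small; case: Rlt_dec.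
have ratio := stopping_tuples_ratio_le m s k_le_n.
have decayed : INR ('C(n, s) * stopping_tuples_ub n k s ^ m) / INR (n ^_ k) ^ m
    <= exp K * (INR 'C(n, s) * exp (- (mu * N * L * q s))).
  rewrite mult_INR /Rdiv Rmult_assoc.
  have := Rmult_le_compat_l _ _ _ C_ge0 (Rle_trans _ _ _ ratio (exp_hit_rate_le le_sn)).
  by rewrite -/(q s); lra.
apply: Rle_trans decayed _.
case: (Rle_dec (INR s) (delta * N)) => [s_le | /Rnot_le_lt/Rlt_le s_ge].
  have := small_size_term_le s_gt0 s_le; rewrite -(pos_powE _ s_gt0) => small.
  by have := Rmult_le_compat_l _ _ _ (Rlt_le _ _ eK_gt0) small; lra.
have := Rmult_le_compat_l _ _ _ C_ge0 (large_size_decay_le s_ge s_lt) => large.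
by have := Rmult_le_compat_l _ _ _ (Rlt_le _ _ eK_gt0) large; lra.
Qed.

Hypotheses (rho_le : ln 2 <= - beta * L) (tail_le : N * ln 2 - gam * N * L <= beta * L).

Lemma prob_small_stopping_le :
  prob_small_stopping k d alpha mu n <= 3 * exp K * Rpower N beta.
Proof.
rewrite /prob_small_stopping -/m total_countE INR_expn /Rpower -/N -/L.
set T := INR (n ^_ k) ^ m; set rho := exp (beta * L).
have T_gt0 : 0 < T by apply/pow_lt/lt_0_INR/ltP; rewrite ffact_gt0.
have := bad_count_le_sum_sizes n m (alpha_small alpha n) d_gt1 (ltnW k_ge2).
move/leP/le_INR; rewrite INR_sum_ord => bad_le.
apply: Rle_trans (Rmult_le_compat_r _ _ _ (Rlt_le _ _ (Rinv_0_lt_compat _ T_gt0)) bad_le) _.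
rewrite Rmult_comm scal_sum.
apply: Rle_trans (sum_Rle _ _ n (fun s le_sn => size_term_le (introT leP le_sn))) _.
rewrite plus_sum -!scal_sum -INR_sum_ord sum_bin INR_expn.
have rho_le_half : rho <= / 2.
  by rewrite -(exp_ln (/ 2)) ?ln_Rinv; [apply: exp_le; lra | lra | lra].
have := sum_pos_pow_le n (conj (Rlt_le _ _ (exp_pos (beta * L))) rho_le_half).
have tail : exp K * exp (- (gam * N * L)) * INR 2 ^ n <= exp K * rho.
  rewrite Rmult_assoc; apply: Rmult_le_compat_l; first exact/Rlt_le/exp_pos.
  rewrite -[INR 2](exp_ln 2) ?exp_pow -?exp_plus; last by rewrite /=; lra.
  by apply: exp_le; rewrite -/N; lra.
rewrite -/rho => sum_le; have := exp_pos K; nra.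
Qed.

End LargeN.

Lemma eventually_large_enough : eventually (fun n =>
  [/\ 2 <= INR n, K <= delta * INR n, K <= (1 - alpha) * INR n / 2,
      ln 2 <= - beta * ln (INR n)
    & INR n * ln 2 - gam * INR n * ln (INR n) <= beta * ln (INR n)]).
Proof.
have beta_lt0 : beta < 0 by have := eps_range; rewrite -/K /beta; lra.
have div_le a b x : 0 < b -> a / b <= x -> a <= b * x.
  move=> b_gt0 /(Rmult_le_compat_l b _ _ (Rlt_le _ _ b_gt0)).
  by have -> : b * (a / b) = a by field; lra.
apply: eventually_mono (eventually_and (eventually_INR_ge 2)
  (eventually_and (eventually_INR_ge (K / delta))
  (eventually_and (eventually_INR_ge (2 * K / (1 - alpha)))
  (eventually_and (eventually_INR_ge (- 2 * beta / gam))
  (eventually_and (eventually_ln_INR_ge (ln 2 / - beta))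
                  (eventually_ln_INR_ge (2 * ln 2 / gam))))))).
move=> n [N_ge2 [/div_le N_ge1 [/div_le N_ge3 [/div_le N_ge4 [/div_le L_ge1 /div_le L_ge2]]]]].
have L_ge0 : 0 <= ln (INR n).
  by rewrite -ln_1; apply: ln_le; lra.
have := N_ge1 delta_gt0; have := N_ge3 ltac:(lra); have := N_ge4 gam_gt0.
have := L_ge1 ltac:(lra); have := L_ge2 gam_gt0.
move=> L_tail L_rho N_tail N_alpha N_delta; split=> //; first lra.
have : 0 <= (gam * ln (INR n) - 2 * ln 2) * INR n by apply: Rmult_le_pos; lra.
have : 0 <= (gam * INR n + 2 * beta) * ln (INR n) by apply: Rmult_le_pos; lra.
nra.
Qed.

End Asymptotics.

Theorem mainTheorem3 (k d : nat) (alpha mu eps : R) :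
  le 2 k -> le 2 d -> le d k ->
  0 < alpha < 1 ->
  / INR k < mu ->
  0 < eps < mu * INR k - 1 ->
  exists (C : R) (N : nat), forall n : nat, le N n ->
    prob_small_stopping k d alpha mu n
      <= C * Rpower (INR n) (1 - mu * INR k + eps).
Proof.
move=> /leP k_ge2 /leP d_ge2 _ alpha01 mu_gt eps_range.
have mu_gt0 : 0 < mu.
  have : 0 < / INR k by apply/Rinv_0_lt_compat/lt_0_INR/ltP; exact: ltnW k_ge2.
  lra.
have [N0 large] := eventually_large_enough k_ge2 alpha01 mu_gt0 eps_range.
exists (3 * exp (INR k)), N0 => n /large[N_ge2 deltaN_ge alphaN_ge rho_le tail_le].
exact: prob_small_stopping_le.
Qed.
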